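(* Let $X \in \mathbb{R}^{N\times D}$ and $y \in \mathbb{R}^N$, and suppose the rows of $X$ (with corresponding entries of $y$) are partitioned into $E$ subsets, giving blocks $X_i \in \mathbb{R}^{N_i \times D}$, $y_i\in\mathbb{R}^{N_i}$ for $i\in[E]$, so that $X^\top X = \sum_i X_i^\top X_i$ and $X^\top y = \sum_i X_i^\top y_i$. Let $$w^* = (X^\top X)^{\dagger} X^\top y, \qquad w_i^* = (X_i^\top X_i)^{\dagger} X_i^\top y_i \quad (i\in[E]),$$ the minimum-norm least-squares solutions of $\min_w \|Xw-y\|^2$ and $\min_{w_i}\|X_iw_i-y_i\|^2$ respectively. Let $U_1,\dots,U_E$ be matrices with orthonormal columns whose column spaces are mutually orthogonal subspaces of $\mathbb{R}^D$ with $\sum_{i=1}^E U_iU_i^\top = I_D$. Let $\epsilon_1 \ge 0$ be such that $$\big\|U_iU_i^\top (X^\top X)^{\dagger} - (X_i^\top X_i)^{\dagger}\big\|_2 \le \epsilon_1 \quad\text{for all } i\in[E],$$ and let $\epsilon_2\ge 0$ be such that for all $i\neq j$ and every $z$ in the column space of $X_j^\top$, $\|(X_i^\top X_i)^{\dagger} z\| \le \epsilon_2\|z\|$. Then $$\|w^*\|^2 \ge \sum_{i=1}^E \Big( \Big\lfloor \|w_i^*\| - \epsilon_1 \|X^\top y\| - \epsilon_2 \sum_{j\neq i}\|X_j^\top y_j\| \Big\rfloor_+\Big)^2,$$ where $\lfloor a\rfloor_+ = \max(a,0)$.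
   Context: $^{\dagger}$ denotes the Moore–Penrose pseudo-inverse, $\|\cdot\|$ the Euclidean norm on vectors, and $\|\cdot\|_2$ the spectral norm on matrices. $[E]=\{1,\dots,E\}$. The Lipschitz constant of the linear map $x\mapsto \langle w,x\rangle$ is $\|w\|$; $w^*$ represents a dense linear model and $w_i^*$ the linear expert $i$ under fixed routing of subset $i$ to expert $i$. *)

From HB Require Import structures.
From mathcomp Require Import all_boot all_order all_algebra.
From mathcomp Require Import classical_sets reals.
Set Implicit Arguments. Unset Strict Implicit. Unset Printing Implicit Defensive.
Import Order.TTheory GRing.Theory Num.Theory.
Local Open Scope classical_set_scope.
Local Open Scope ring_scope.

Definition vnorm {R : realType} {n : nat} (v : 'cV[R]_n) : R :=
  Num.sqrt (\sum_(k < n) v k 0 ^+ 2).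

Definition spec_norm {R : realType} {m n : nat} (A : 'M[R]_(m, n)) : R :=
  sup [set vnorm (A *m v) | v in [set v : 'cV[R]_n | vnorm v <= 1]].

Definition is_mp_pinv {R : realType} {m n : nat}
    (A : 'M[R]_(m, n)) (B : 'M[R]_(n, m)) : Prop :=
  [/\ A *m B *m A = A, B *m A *m B = B,
      (A *m B)^T = A *m B & (B *m A)^T = B *m A].

(* Moore-Penrose pseudo-inverse A^dagger (the unique matrix satisfying the
   Penrose conditions; it exists for every real matrix). *)
Definition pinv {R : realType} {m n : nat} (A : 'M[R]_(m, n)) : 'M[R]_(n, m) :=
  xget 0 [set B | is_mp_pinv A B].

(* Block i of the row partition given by g : 'I_N -> 'I_E :
   the rows r with g r = i, in increasing order. *)
Definition block_size {N E : nat} (g : 'I_N -> 'I_E) (i : 'I_E) : nat :=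
  #|[pred r | g r == i]|.

Definition blockX {R : realType} {N D E : nat} (g : 'I_N -> 'I_E)
    (X : 'M[R]_(N, D)) (i : 'I_E) : 'M[R]_(block_size g i, D) :=
  rowsub (fun k : 'I_(block_size g i) => @enum_val _ [pred r | g r == i] k) X.

Definition blocky {R : realType} {N E : nat} (g : 'I_N -> 'I_E)
    (y : 'cV[R]_N) (i : 'I_E) : 'cV[R]_(block_size g i) :=
  rowsub (fun k : 'I_(block_size g i) => @enum_val _ [pred r | g r == i] k) y.

Definition pos_part {R : realType} (a : R) : R := Num.max a 0.

From HB Require Import structures.
From mathcomp Require Import all_boot all_order all_algebra.
From mathcomp Require Import classical_sets reals.
From mathcomp Require Import ring lra.
Set Implicit Arguments. Unset Strict Implicit. Unset Printing Implicit Defensive.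
Import Order.TTheory GRing.Theory Num.Theory.
Local Open Scope ring_scope.

(* Write P = (X^T X)^+, P_i = (X_i^T X_i)^+, b_j = X_j^T y_j and
   M_i = U_i U_i^T.  Since X^T y = sum_j b_j, the expert solution decomposes as
     w_i* = P_i b_i = M_i w* - (M_i P - P_i) X^T y - sum_(j <> i) P_i b_j,
   so the triangle inequality, the operator-norm bound for eps1 and the
   cross-block bound for eps2 give
     ||w_i*|| - eps1 ||X^T y|| - eps2 sum_(j <> i) ||b_j|| <= ||M_i w*||.
   Squaring (after taking the positive part) and summing over i, the theorem
   follows from the Pythagorean identity ||w||^2 = sum_i ||M_i w||^2, valid
   because the M_i are orthogonal projections summing to the identity. *)

Section EuclideanNorm.
Variable R : realType.

Lemma vnorm_ge0 n (v : 'cV[R]_n) : 0 <= vnorm v.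
Proof. exact: sqrtr_ge0. Qed.

Lemma vnorm_sqE n (v : 'cV[R]_n) : vnorm v ^+ 2 = \sum_k v k 0 ^+ 2.
Proof. by rewrite /vnorm sqr_sqrtr // sumr_ge0 // => k _; rewrite sqr_ge0. Qed.

Lemma vnorm_sq_mx n (v : 'cV[R]_n) : vnorm v ^+ 2 = (v^T *m v) 0 0.
Proof. by rewrite vnorm_sqE !mxE; apply: eq_bigr => k _; rewrite !mxE expr2. Qed.

Lemma vnorm0 n : vnorm (0 : 'cV[R]_n) = 0.
Proof. by rewrite /vnorm big1 ?sqrtr0 // => k _; rewrite mxE expr0n. Qed.

Lemma vnormZ n a (v : 'cV[R]_n) : vnorm (a *: v) = `|a| * vnorm v.
Proof.
rewrite /vnorm -sqrtr_sqr -sqrtrM ?sqr_ge0 // mulr_sumr; congr Num.sqrt.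
by apply: eq_bigr => k _; rewrite mxE exprMn.
Qed.

Lemma vnormN n (v : 'cV[R]_n) : vnorm (- v) = vnorm v.
Proof. by rewrite -scaleN1r vnormZ normrN normr1 mul1r. Qed.

Lemma normr_coord_le n (v : 'cV[R]_n) j : `|v j 0| <= vnorm v.
Proof.
rewrite -sqrtr_sqr ler_sqrt ?sqr_ge0 //; last by rewrite sumr_ge0 // => k _; rewrite sqr_ge0.
by rewrite (bigD1 j) //= lerDl sumr_ge0 // => k _; rewrite sqr_ge0.
Qed.

Lemma vnorm_eq0 n (v : 'cV[R]_n) : vnorm v = 0 -> v = 0.
Proof.
move=> v0; apply/matrixP => i j; rewrite (ord1 j) mxE; apply/eqP.
by rewrite -normr_eq0 eq_le normr_ge0 andbT -v0 normr_coord_le.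
Qed.

Definition dotv n (u v : 'cV[R]_n) : R := \sum_k u k 0 * v k 0.

(* Lagrange's identity, the algebraic core of Cauchy-Schwarz. *)
Lemma lagrange_identity (I : finType) (a b : I -> R) :
  \sum_k \sum_l (a k * b l - a l * b k) ^+ 2 =
  2 * ((\sum_k a k ^+ 2) * (\sum_k b k ^+ 2) - (\sum_k a k * b k) ^+ 2).
Proof.
have sum_prod (c d : I -> R) :
    \sum_k \sum_l c k * d l = (\sum_k c k) * (\sum_l d l).
  by rewrite mulr_suml; apply: eq_bigr => k _; rewrite mulr_sumr.
have expand : \sum_k \sum_l (a k * b l - a l * b k) ^+ 2 =
    \sum_k \sum_l a k ^+ 2 * b l ^+ 2 + \sum_k \sum_l a l ^+ 2 * b k ^+ 2
    - 2 * \sum_k \sum_l (a k * b k) * (a l * b l).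
  rewrite mulr_sumr -big_split -sumrB /=; apply: eq_bigr => k _.
  by rewrite mulr_sumr -big_split -sumrB /=; apply: eq_bigr => l _; ring.
rewrite expand [X in _ + X - _]exchange_big /= !sum_prod; ring.
Qed.

Lemma dotv_le n (u v : 'cV[R]_n) : dotv u v <= vnorm u * vnorm v.
Proof.
have cs : dotv u v ^+ 2 <= (vnorm u * vnorm v) ^+ 2.
  rewrite exprMn !vnorm_sqE -subr_ge0 /dotv.
  rewrite -(pmulr_rge0 _ (ltr0n R 2)) -lagrange_identity.
  by rewrite !sumr_ge0 // => k _; rewrite sumr_ge0 // => l _; rewrite sqr_ge0.
apply: le_trans (ler_norm _) _.
by rewrite -ler_sqr ?nnegrE ?normr_ge0 ?mulr_ge0 ?vnorm_ge0 // real_normK ?num_real.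
Qed.

Lemma vnormD n (u v : 'cV[R]_n) : vnorm (u + v) <= vnorm u + vnorm v.
Proof.
rewrite -ler_sqr ?nnegrE ?addr_ge0 ?vnorm_ge0 //.
have -> : vnorm (u + v) ^+ 2 = vnorm u ^+ 2 + 2 * dotv u v + vnorm v ^+ 2.
  rewrite !vnorm_sqE /dotv mulr_sumr -!big_split /=; apply: eq_bigr => k _.
  by rewrite !mxE; ring.
have := dotv_le u v; nra.
Qed.

Lemma vnorm_sum n (I : finType) (P : pred I) (F : I -> 'cV[R]_n) :
  vnorm (\sum_(i | P i) F i) <= \sum_(i | P i) vnorm (F i).
Proof.
apply: (big_ind2 (fun x y => vnorm x <= y)); first by rewrite vnorm0.
- by move=> a b c d hac hbd; apply: le_trans (vnormD _ _) (lerD hac hbd).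
- by [].
Qed.

End EuclideanNorm.

Section SpectralNorm.
Variable R : realType.

Lemma spec_norm_set_bounded m n (A : 'M[R]_(m, n)) :
  has_ubound [set vnorm (A *m v) | v in [set v : 'cV[R]_n | vnorm v <= 1]].
Proof.
exists (Num.sqrt (\sum_i (\sum_j `|A i j|) ^+ 2)) => _ [w /= w_le1 <-].
rewrite /vnorm ler_sqrt; last by rewrite sumr_ge0 // => *; rewrite sqr_ge0.
apply: ler_sum => i _; rewrite mxE -real_normK ?num_real //.
rewrite ler_pXn2r ?nnegrE ?normr_ge0 ?sumr_ge0 //.
apply: le_trans (ler_norm_sum _ _ _) _; apply: ler_sum => j _.
rewrite normrM -[X in _ <= X]mulr1 ler_wpM2l //.
exact: le_trans (normr_coord_le _ _) w_le1.
Qed.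

Lemma spec_norm_bound m n (A : 'M[R]_(m, n)) (v : 'cV[R]_n) :
  vnorm (A *m v) <= spec_norm A * vnorm v.
Proof.
have [/vnorm_eq0 ->|vn0] := eqVneq (vnorm v) 0.
  by rewrite mulmx0 !vnorm0 mulr0.
have vpos : 0 < vnorm v by rewrite lt0r vn0 vnorm_ge0.
have unit_bound : vnorm (A *m ((vnorm v)^-1 *: v)) <= spec_norm A.
  apply: (ub_le_sup (spec_norm_set_bounded A)); exists ((vnorm v)^-1 *: v) => //=.
  by rewrite vnormZ ger0_norm ?invr_ge0 ?vnorm_ge0 // mulVf.
move: unit_bound; rewrite -scalemxAr vnormZ ger0_norm ?invr_ge0 ?vnorm_ge0 //.
by rewrite mulrC -ler_pdivlMr ?invr_gt0 // invrK.
Qed.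

End SpectralNorm.

Lemma blocks_normal_rhs (R : realType) N D E (X : 'M[R]_(N, D)) (y : 'cV[R]_N)
    (g : 'I_N -> 'I_E) :
  X^T *m y = \sum_(j < E) (blockX g X j)^T *m blocky g y j.
Proof.
apply/matrixP => d c; rewrite summxE !mxE (partition_big g predT) //=.
apply: eq_bigr => j _; rewrite mxE /blockX /blocky.
rewrite (big_enum_val (A := [pred r | g r == j]) (fun r => X^T d r * y r c)) /=.
by apply: eq_bigr => l _; rewrite !mxE.
Qed.

Lemma pythagoras_projections (R : realType) D E (k : 'I_E -> nat)
    (U : forall i : 'I_E, 'M[R]_(D, k i))
    (U_orth : forall i, (U i)^T *m U i = 1%:M)
    (U_sum : \sum_(i < E) U i *m (U i)^T = 1%:M) (w : 'cV[R]_D) :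
  vnorm w ^+ 2 = \sum_i vnorm (U i *m (U i)^T *m w) ^+ 2.
Proof.
have proj_sq i : vnorm (U i *m (U i)^T *m w) ^+ 2 = (w^T *m (U i *m (U i)^T) *m w) 0 0.
  rewrite vnorm_sq_mx !trmx_mul trmxK -!mulmxA; congr (_ 0 0); congr (_ *m _).
  by rewrite !mulmxA -(mulmxA (U i)) U_orth mulmx1.
rewrite (eq_bigr _ (fun i _ => proj_sq i)) -summxE -mulmx_suml -mulmx_sumr.
by rewrite U_sum mulmx1 vnorm_sq_mx.
Qed.

Lemma expert_decomposition (R : pzRingType) D E (M P Pi : 'M[R]_D)
    (b : 'I_E -> 'cV[R]_D) (i : 'I_E) :
  Pi *m b i = M *m (P *m \sum_j b j) - (M *m P - Pi) *m \sum_j b j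
              - \sum_(j | j != i) Pi *m b j.
Proof.
rewrite mulmxBl mulmxA opprB addrCA subrr addr0 mulmx_sumr (bigD1 i) //=.
by rewrite addrK.
Qed.

Lemma pos_part_sq_le (R : realType) (a c : R) :
  a <= c -> 0 <= c -> pos_part a ^+ 2 <= c ^+ 2.
Proof.
move=> ac c_ge0; rewrite /pos_part.
by rewrite ler_pXn2r ?nnegrE ?le_max ?lexx ?orbT // ge_max ac c_ge0.
Qed.

Theorem theorem1 (R : realType) (N D E : nat)
  (X : 'M[R]_(N, D)) (y : 'cV[R]_N)
  (g : 'I_N -> 'I_E) (g_surj : forall i : 'I_E, exists r : 'I_N, g r = i)
  (k : 'I_E -> nat) (U : forall i : 'I_E, 'M[R]_(D, k i))
  (U_orth : forall i : 'I_E, (U i)^T *m U i = 1%:M)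
  (U_mutorth : forall i j : 'I_E, i != j -> (U i)^T *m U j = 0)
  (U_sum : \sum_(i < E) U i *m (U i)^T = 1%:M)
  (eps1 eps2 : R) (eps1_ge0 : 0 <= eps1) (eps2_ge0 : 0 <= eps2)
  (H1 : forall i : 'I_E,
     spec_norm (U i *m (U i)^T *m pinv (X^T *m X)
                - pinv ((blockX g X i)^T *m blockX g X i)) <= eps1)
  (H2 : forall i j : 'I_E, i != j ->
     forall z : 'cV[R]_D, (exists u : 'cV[R]_(block_size g j), z = (blockX g X j)^T *m u) ->
     vnorm (pinv ((blockX g X i)^T *m blockX g X i) *m z) <= eps2 * vnorm z) :
  let wstar := pinv (X^T *m X) *m (X^T *m y) in
  let wi := fun i : 'I_E =>
    pinv ((blockX g X i)^T *m blockX g X i) *m ((blockX g X i)^T *m blocky g y i) in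
  \sum_(i < E)
     (pos_part (vnorm (wi i) - eps1 * vnorm (X^T *m y)
                - eps2 * \sum_(j < E | j != i) vnorm ((blockX g X j)^T *m blocky g y j))) ^+ 2
  <= vnorm wstar ^+ 2.
Proof.
cbv zeta; set wstar := pinv (X^T *m X) *m (X^T *m y).
rewrite (pythagoras_projections U_orth U_sum wstar).
apply: ler_sum => i _; apply: pos_part_sq_le; last exact: vnorm_ge0.
set b := fun j => (blockX g X j)^T *m blocky g y j.
set Pi := pinv ((blockX g X i)^T *m blockX g X i).
set M := U i *m (U i)^T.
have rhs_split : X^T *m y = \sum_j b j by exact: blocks_normal_rhs.
suff : vnorm (Pi *m b i) <= vnorm (M *m wstar) + eps1 * vnorm (X^T *m y)
                       + eps2 * \sum_(j | j != i) vnorm (b j) by lra.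
rewrite (expert_decomposition M (pinv (X^T *m X)) Pi b i) -rhs_split -/wstar.
apply: le_trans (vnormD _ _) _; rewrite vnormN.
apply: lerD; last first.
  apply: le_trans (vnorm_sum _ _) _; rewrite mulr_sumr; apply: ler_sum => j ji.
  by apply: H2; [rewrite eq_sym | exists (blocky g y j)].
apply: le_trans (vnormD _ _) _; rewrite vnormN; apply: lerD => //.
apply: le_trans (spec_norm_bound _ _) _.
by apply: ler_wpM2r; [exact: vnorm_ge0 | exact: H1].
Qed.
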